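(* Let constants $C>0$ and $r>0$ be given. For every pair of positive integers $M,n$, let $\boldsymbol{x}_1,\dots,\boldsymbol{x}_M$ be random points that are continuously distributed in the unit ball $\mathbb{B}_n\subset\mathbb{R}^n$, and assume that their conditional densities satisfy $$\rho_n(\boldsymbol{x}_i \mid \boldsymbol{x}_j=\boldsymbol{y}_j,\ \forall j\neq i)\le \frac{C}{r^n V_n(\mathbb{B}_n)}$$ for every $n$, every index $i\in\{1,\dots,M\}$ and all points $\boldsymbol{y}_1,\dots,\boldsymbol{y}_{i-1},\boldsymbol{y}_{i+1},\dots,\boldsymbol{y}_M\in\mathbb{R}^n$. Then this family of joint distributions has the SmAC property with the same constant $C$, with any $B\in(0,1)$, and with $A=Br$.
   Context: $\mathbb{B}_n$ is the unit ball in $\mathbb{R}^n$ and $V_n$ is $n$-dimensional Lebesgue measure. We consider a family of joint distributions of $\boldsymbol{x}_1,\dots,\boldsymbol{x}_M\in\mathbb{R}^n$, one for each pair of positive integers $(M,n)$. This family has the SmAC (Smeared Absolute Continuity) property if there exist constants $A>0$, $B\in(0,1)$, $C>0$ (independent of $M$ and $n$) such that for every positive integer $n$, every convex set $S\subset\mathbb{R}^n$ with $V_n(S)/V_n(\mathbb{B}_n)\le A^n$, every index $i\in\{1,\dots,M\}$, and all points $\boldsymbol{y}_1,\dots,\boldsymbol{y}_{i-1},\boldsymbol{y}_{i+1},\dots,\boldsymbol{y}_M\in\mathbb{R}^n$, $$\mathbb{P}(\boldsymbol{x}_i\in\mathbb{B}_n\setminus S \mid \boldsymbol{x}_j=\boldsymbol{y}_j,\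 \forall j\neq i)\ge 1-CB^n.$$ *)

From HB Require Import structures.
From mathcomp Require Import all_boot all_order all_algebra.
From mathcomp Require Import all_classical all_reals all_analysis.
Set Implicit Arguments. Unset Strict Implicit. Unset Printing Implicit Defensive.
Import Order.TTheory GRing.Theory Num.Theory.
Local Open Scope classical_set_scope.
Local Open Scope ring_scope.

Section Defs.
Context {R : realType}.

Fixpoint iter_int (T : Type) (I : (T -> \bar R) -> \bar R) (m : nat)
  : (m.-tuple T -> \bar R) -> \bar R :=
  match m return (m.-tuple T -> \bar R) -> \bar R with
  | 0 => fun f => f [tuple]
  | m'.+1 => fun f => I (fun x => iter_int I (fun t => f (cons_tuple x t)))
  end.

(* Lebesgue integral on R^n (points of R^n are n.-tuples of reals),
   as the iterated one-dimensional Lebesgue integral. *)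
Definition intn (n : nat) : (n.-tuple R -> \bar R) -> \bar R :=
  @iter_int _ (fun g : R -> \bar R => (\int[@lebesgue_measure R]_x g x)%E) n.

Definition Vn (n : nat) (A : set (n.-tuple R)) : \bar R :=
  intn (fun t => (\1_A t)%:E).

Definition intMn (M n : nat) : (M.-tuple (n.-tuple R) -> \bar R) -> \bar R :=
  @iter_int _ (@intn n) M.

Definition enorm (n : nat) (t : n.-tuple R) : R :=
  Num.sqrt (\sum_(i < n) tnth t i ^+ 2).

Definition unit_ball (n : nat) : set (n.-tuple R) := [set t | enorm t <= 1].
Arguments unit_ball n : clear implicits.

Definition convex_set (n : nat) (S : set (n.-tuple R)) : Prop :=
  forall x y, S x -> S y -> forall t : R, 0 <= t <= 1 ->
    S [tuple t * tnth x i + (1 - t) * tnth y i | i < n].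

Definition replace (M n : nat) (y : M.-tuple (n.-tuple R)) (i : 'I_M)
  (z : n.-tuple R) : M.-tuple (n.-tuple R) :=
  [tuple if j == i then z else tnth y j | j < M].

(* A joint distribution of x_1..x_M in R^n given by a joint density, together
   with conditional densities: cdens i y is the density of x_i given
   x_j = tnth y j for all j <> i (the entry tnth y i is irrelevant). *)
Record joint_model (M n : nat) := JointModel {
  jdens : M.-tuple (n.-tuple R) -> R;
  cdens : 'I_M -> M.-tuple (n.-tuple R) -> n.-tuple R -> R }.

Definition marginal_others (M n : nat) (P : joint_model M n) (i : 'I_M)
  (y : M.-tuple (n.-tuple R)) : \bar R :=
  intn (fun w => (jdens P (replace y i w))%:E).

(* Well-formedness: continuous distribution in the unit ball, with
   conditional densities that are (versions of) the conditional densities. *)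
Definition is_joint_model (M n : nat) (P : joint_model M n) : Prop :=
  [/\ measurable_fun setT (jdens P),
      (forall y, 0 <= jdens P y),
      (forall y, ~ (forall j, unit_ball n (tnth y j)) -> jdens P y = 0),
      intMn (fun y => (jdens P y)%:E) = 1%E &
      forall i y,
      [/\ measurable_fun setT (cdens P i y) /\ (forall z, 0 <= cdens P i y z),
          (forall z, ~ unit_ball n z -> cdens P i y z = 0),
          intn (fun z => (cdens P i y z)%:E) = 1%E,
          (forall y', (forall j, j != i -> tnth y j = tnth y' j) ->
                      cdens P i y = cdens P i y') &
          (forall z, (jdens P (replace y i z))%:E =
                     ((cdens P i y z)%:E * marginal_others P i y)%E)]].

Definition cond_prob (M n : nat) (P : joint_model M n) (i : 'I_M)
  (y : M.-tuple (n.-tuple R)) (A : set (n.-tuple R)) : \bar R :=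
  intn (fun z => (\1_A z * cdens P i y z)%:E).

Definition SmAC_with (A B C : R) (fam : forall M n : nat, joint_model M n) : Prop :=
  [/\ 0 < A, 0 < B < 1, 0 < C &
   forall (M n : nat), (0 < M)%N -> (0 < n)%N ->
   forall S : set (n.-tuple R), convex_set S ->
   (Vn S <= (A ^+ n)%:E * Vn (unit_ball n))%E ->
   forall (i : 'I_M) (y : M.-tuple (n.-tuple R)),
     ((1 - C * B ^+ n)%:E <= cond_prob (fam M n) i y (unit_ball n `\` S))%E].

End Defs.
Arguments unit_ball {R} n.

From Pilot Require Import Defs.
From HB Require Import structures.
From mathcomp Require Import all_boot all_order all_algebra.
From mathcomp Require Import all_classical all_reals all_analysis.
From mathcomp Require Import measurable_realfun.
From mathcomp Require Import ring lra.
Import Order.TTheory GRing.Theory Num.Theory.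
Local Open Scope classical_set_scope.
Local Open Scope ring_scope.

(* The conditional density f of x_i is bounded by K = C / (r^n V_n(B_n)),
   so the conditional mass of a measurable set W is at most K V_n(W), and
   B_n \ S carries at least the mass of the complement of any measurable
   W containing S.  The convex set S is not assumed measurable (V_n(S) is
   the inner integral of its indicator), so W is taken to be the closure of
   S.  For convex S each slice {t | (x, t) in closure S} lies in the closure
   of the slice of S, except at the two extreme values x = inf and x = sup
   of the first coordinate on S; induction on n then gives
   V_n(closure S) <= V_n(S) <= (B r)^n V_n(B_n), whence the mass of W is at
   most C B^n. *)

Section IteratedIntegral.
Context {R : realType}.
Local Notation leb := (@lebesgue_measure R).
Local Open Scope ereal_scope.

Lemma ge0_le_integralT d (T : measurableType d) (mu : measure T R)
    (f g : T -> \bar R) :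
  (forall x, 0 <= f x) -> (forall x, f x <= g x) ->
  \int[mu]_x f x <= \int[mu]_x g x.
Proof.
move=> f0 fg.
have g0 x : 0 <= g x by exact: le_trans (f0 x) (fg x).
rewrite (ge0_integralTE mu f0) (ge0_integralTE mu g0).
apply: ereal_sup_le => _ [h /= hf <-]; exists h => //= x.
exact: le_trans (hf x) (fg x).
Qed.

Lemma intnS n (f : n.+1.-tuple R -> \bar R) :
  intn f = \int[leb]_x intn (fun t => f (cons_tuple x t)).
Proof. by []. Qed.

Lemma intn_ge0 n (f : n.-tuple R -> \bar R) :
  (forall t, 0 <= f t) -> 0 <= intn f.
Proof.
elim: n f => [|n IH] f f0; first exact: f0.
by apply: integral_ge0 => x _; apply: IH.
Qed.

Lemma le_intn n (f g : n.-tuple R -> \bar R) :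
  (forall t, 0 <= f t) -> (forall t, f t <= g t) -> intn f <= intn g.
Proof.
elim: n f g => [|n IH] f g f0 fg; first exact: fg.
by apply: ge0_le_integralT => x; [apply: intn_ge0|apply: IH].
Qed.

Lemma intn0 n : intn (fun _ : n.-tuple R => 0) = 0.
Proof.
elim: n => [//|n IH]; rewrite intnS.
under eq_integral do rewrite IH.
exact: integral0.
Qed.

Lemma measurable_fun_intn n d (X : measurableType d)
    (h : X * n.-tuple R -> \bar R) :
  measurable_fun setT h -> (forall p, 0 <= h p) ->
  measurable_fun setT (fun x => intn (fun t => h (x, t))).
Proof.
elim: n d X h => [|n IH] d X h mh h0.
  exact: measurableT_comp mh (measurable_fun_pair _ _).
pose h' (q : (X * R) * n.-tuple R) := h (q.1.1, cons_tuple q.1.2 q.2).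
have mh' : measurable_fun setT h'.
  apply: measurableT_comp mh (measurable_fun_pair _ _).
    exact: measurableT_comp measurable_fst measurable_fst.
  exact: measurable_cons (measurableT_comp measurable_snd measurable_fst) _.
have mG := IH _ _ h' mh' (fun q => h0 _).
have := @measurable_fun_fubini_tonelli_F _ _ _ _ _ leb _ mG.
by apply => // p; apply: intn_ge0 => t; exact: h0.
Qed.

Lemma measurable_fun_cons_section n (f : n.+1.-tuple R -> \bar R) (x : R) :
  measurable_fun setT f -> measurable_fun setT (fun t => f (cons_tuple x t)).
Proof. by move=> mf; apply: measurableT_comp mf (measurable_cons _ _). Qed.

Lemma measurable_fun_intn_cons n (f : n.+1.-tuple R -> \bar R) :
  measurable_fun setT f -> (forall t, 0 <= f t) ->
  measurable_fun setT (fun x : R => intn (fun t => f (cons_tuple x t))).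
Proof.
move=> mf f0.
apply: (@measurable_fun_intn n _ _ (fun p => f (cons_tuple p.1 p.2))) => //.
exact: measurableT_comp mf (measurable_cons _ _).
Qed.

Lemma intnD n (f g : n.-tuple R -> \bar R) :
  measurable_fun setT f -> measurable_fun setT g ->
  (forall t, 0 <= f t) -> (forall t, 0 <= g t) ->
  intn (fun t => f t + g t) = intn f + intn g.
Proof.
elim: n f g => [//|n IH] f g mf mg f0 g0.
rewrite intnS -ge0_integralD //; last 4 first.
- by move=> x _; apply: intn_ge0.
- exact: measurable_fun_intn_cons.
- by move=> x _; apply: intn_ge0.
- exact: measurable_fun_intn_cons.
apply: eq_integral => x _.
by apply: IH => //; exact: measurable_fun_cons_section.
Qed.

Lemma intnZ n (k : R) (f : n.-tuple R -> \bar R) : (0 <= k)%R ->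
  measurable_fun setT f -> (forall t, 0 <= f t) ->
  intn (fun t => k%:E * f t) = k%:E * intn f.
Proof.
elim: n f => [//|n IH] f k0 mf f0.
rewrite intnS -ge0_integralZl_EFin //; last 2 first.
- by move=> x _; apply: intn_ge0.
- exact: measurable_fun_intn_cons.
apply: eq_integral => x _.
by apply: IH => //; exact: measurable_fun_cons_section.
Qed.

End IteratedIntegral.

Section TupleClosure.
Context {R : realType} {n : nat}.
Implicit Types (S : set (n.-tuple R)) (w : n.-tuple R).

Definition tclosure S : set (n.-tuple R) :=
  [set w | forall e : R, 0 < e ->
     exists2 s, S s & forall i, `|tnth w i - tnth s i| < e].

Lemma subset_tclosure S : S `<=` tclosure S.
Proof. by move=> w Sw e e0; exists w => // i; rewrite subrr normr0. Qed.

Definition rat_box (q : n.-tuple rat) (x : R) : set (n.-tuple R) :=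
  [set w | forall i, `|tnth w i - ratr (tnth q i)| < x].

Lemma measurable_rat_box q x : measurable (rat_box q x).
Proof.
have -> : rat_box q x = \bigcap_(i in [set: 'I_n])
    ((fun w : n.-tuple R => tnth w i) @^-1`
       `](ratr (tnth q i) - x), (ratr (tnth q i) + x)[).
  apply/seteqP; split => w /=.
    by move=> H i _ /=; rewrite in_itv /= -ltr_distlC distrC; exact: H.
  by move=> H i; have := H i I; rewrite /= in_itv /= -ltr_distlC distrC.
apply: fin_bigcap_measurable; first exact: finite_finset.
move=> i _; rewrite -[X in measurable X]setTI.
exact: (measurable_tnth i) (measurable_itv _).
Qed.

Lemma rat_tuple_near w (e : R) : 0 < e ->
  exists q : n.-tuple rat, forall i, `|tnth w i - ratr (tnth q i)| < e.
Proof.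
move=> e0.
have near_i i : exists q : rat, `|tnth w i - ratr q| < e.
  have [|q] := @rat_in_itvoo R (tnth w i - e) (tnth w i + e); first lra.
  by rewrite in_itv /= -ltr_distlC => ?; exists q.
exists [tuple projT1 (cid (near_i i)) | i < n] => i.
by rewrite tnth_mktuple; exact: projT2 (cid (near_i i)).
Qed.

Lemma tclosure_rat_boxes S : tclosure S =
  \bigcap_(k : nat) \bigcup_(q : n.-tuple rat)
     (rat_box q k.+1%:R^-1 `&` [set _ | rat_box q k.+1%:R^-1 `&` S !=set0]).
Proof.
apply/seteqP; split => w.
  move=> wS k _; set x : R := k.+1%:R^-1.
  have x0 : 0 < x by rewrite invr_gt0 ltr0n.
  have x20 : 0 < x / 2 by rewrite divr_gt0.
  have [s Ss ws] := wS _ x20; have [q wq] := rat_tuple_near w _ x20.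
  exists q => //; split => [i|]; first by have := wq i; lra.
  exists s; split => // i.
  have := ler_distD (tnth w i) (tnth s i) (ratr (tnth q i)).
  by have := ws i; have := wq i; rewrite (distrC (tnth s i) (tnth w i)); lra.
move=> wU e e0; have [q _ [wq [s [sq Ss]]]] := wU (Num.Def.truncn (2 / e)) I.
move: sq wq; set x : R := (Num.Def.truncn (2 / e)).+1%:R^-1 => sq wq.
have xe : 2 * x < e.
  by rewrite ltr_pdivrMr ?ltr0n// mulrC -ltr_pdivrMr // truncnS_gt.
exists s => // i.
have := ler_distD (ratr (tnth q i)) (tnth w i) (tnth s i).
by have := sq i; have := wq i; rewrite (distrC (ratr _) (tnth s i)); lra.
Qed.

(* Whether a box meets S does not depend on the point, so each term of the
   union is either a box or empty. *)
Lemma measurable_tclosure S : measurable (tclosure S).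
Proof.
rewrite tclosure_rat_boxes; apply: bigcapT_measurable => k.
apply: countable_bigcupT_measurable => [|q]; first exact: countableP.
have [meets|] := pselect (rat_box q k.+1%:R^-1 `&` S !=set0).
  rewrite (_ : [set _ | _] = setT) ?setIT; first exact: measurable_rat_box.
  by apply/seteqP; split.
move=> nmeets; rewrite (_ : [set _ | _] = set0) ?setI0 //.
by apply/seteqP; split.
Qed.

End TupleClosure.

Section AdherentBounds.
Context {R : realType}.
Implicit Types (P : set R) (x : R).

Definition adherent_to P x := forall e, 0 < e -> exists2 a, P a & `|a - x| < e.

Lemma adherent_lbound_inf {P x} : adherent_to P x -> lbound P x -> inf P = x.
Proof.
move=> adx lbx; have [a Pa _] := adx 1 ltr01.
apply/eqP; rewrite eq_le lb_le_inf ?andbT; last 2 first.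
- by exists a.
- exact: lbx.
apply/ler_addgt0Pr => e /adx [b Pb bx].
have := ge_inf (ex_intro _ x lbx) Pb; have := ler_norm (b - x); lra.
Qed.

Lemma adherent_ubound_sup {P x} : adherent_to P x -> ubound P x -> sup P = x.
Proof.
move=> adx ubx; have [a Pa _] := adx 1 ltr01.
apply/eqP; rewrite eq_le ge_sup //=; last by exists a.
apply/ler_addgt0Pr => e /adx [b Pb bx].
have := sup_upper_bound (conj (ex_intro _ a Pa) (ex_intro _ x ubx)) Pb.
rewrite distrC in bx; have := ler_norm (x - b); lra.
Qed.

End AdherentBounds.

Section ConvexSlices.
Context {R : realType}.

Definition tmix {n} (l : R) (s u : n.-tuple R) : n.-tuple R :=
  [tuple l * tnth s i + (1 - l) * tnth u i | i < n].

Lemma ler_dist_mix (l w s u : R) : 0 <= l <= 1 ->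
  `|w - (l * s + (1 - l) * u)| <= l * `|w - s| + (1 - l) * `|w - u|.
Proof.
move=> /andP[l0 l1].
rewrite (_ : w - _ = l * (w - s) + (1 - l) * (w - u)); last by ring.
apply: le_trans (ler_normD _ _) _.
by rewrite !normrM (ger0_norm l0) (ger0_norm (_ : 0 <= 1 - l)) //; lra.
Qed.

Context {n : nat}.
Implicit Types (S : set (n.+1.-tuple R)) (x : R).

Definition slice S x : set (n.-tuple R) := [set t | S (cons_tuple x t)].

Definition head_range S : set R := [set x | slice S x !=set0].

Lemma convex_cons S (y z l : R) (s u : n.-tuple R) :
  Defs.convex_set S -> 0 <= l <= 1 ->
  S (cons_tuple y s) -> S (cons_tuple z u) ->
  S (cons_tuple (l * y + (1 - l) * z) (tmix l s u)).
Proof.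
move=> cS l01 Sy Sz; have := cS _ _ Sy Sz l l01.
congr S; apply: eq_from_tnth => i; rewrite tnth_mktuple.
by case: (unliftP ord0 i) => [j ->|->]; rewrite ?tnthS ?tnth_mktuple ?tnth0.
Qed.

Lemma convex_slice S x : Defs.convex_set S -> Defs.convex_set (slice S x).
Proof.
move=> cS s u Ss Su l l01; have := @convex_cons S x x l s u cS l01 Ss Su.
by rewrite (_ : l * x + (1 - l) * x = x) //; ring.
Qed.

Lemma convex_cons_at S (x y z : R) (s u : n.-tuple R) :
  Defs.convex_set S -> S (cons_tuple y s) -> S (cons_tuple z u) ->
  (z < x <= y) \/ (y <= x < z) ->
  exists2 l, 0 <= l <= 1 &
    (1 - l) * `|x - z| <= `|y - x| /\ S (cons_tuple x (tmix l s u)).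
Proof.
move=> cS Sy Sz xyz.
have yz : y - z != 0 by apply/eqP => ?; case: xyz => /andP[]; lra.
pose l := (x - z) / (y - z).
have lyz : l * (y - z) = x - z by rewrite /l mulrVK // unitfE.
have l01 : 0 <= l <= 1.
  case: xyz => /andP[h1 h2]; rewrite /l.
    by rewrite divr_ge0 ?ler_pdivrMr /=; lra.
  by rewrite ler_ndivlMr ?ler_ndivrMr /=; lra.
exists l => //; split.
  case/andP: l01 => l0 l1; case: xyz => /andP[h1 h2].
    by rewrite !ger0_norm; [nra|lra|lra].
  by rewrite ltr0_norm ?ler0_norm; [nra|lra|lra].
have := @convex_cons S y z l s u cS l01 Sy Sz.
by rewrite (_ : l * y + (1 - l) * z = x) //; lra.
Qed.

(* Moving (y, s) towards (c, z) until its head is x scales its distance to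
   the far point by 1 - l <= d / D. *)
Lemma slice_point_near S (x y c d D M : R) (s z w : n.-tuple R) :
  Defs.convex_set S -> S (cons_tuple y s) -> S (cons_tuple c z) ->
  (c < x <= y) \/ (y <= x < c) -> 0 < D -> D <= `|x - c| -> 0 <= M ->
  `|y - x| < d -> (forall i, `|tnth w i - tnth s i| < d) ->
  (forall i, `|tnth w i - tnth z i| <= M) ->
  exists2 s', slice S x s' &
    forall i, `|tnth w i - tnth s' i| < d + d * (M / D).
Proof.
move=> cS Sy Sc xyc D0 Dxc M0 yx ws wz.
have [l /andP[l0 l1] [lxc Sx]] := @convex_cons_at S x y c s z cS Sy Sc xyc.
have lD : (1 - l) * D <= d.
  by have := ler_wpM2l (_ : 0 <= 1 - l) Dxc; lra.
have lM : (1 - l) * M <= d * (M / D).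
  rewrite (_ : (1 - l) * M = (1 - l) * D * (M / D)).
    by apply: ler_wpM2r lD; exact: divr_ge0 M0 (ltW D0).
  by field; rewrite gt_eqF.
exists (tmix l s z) => // i; rewrite tnth_mktuple.
apply: le_lt_trans (ler_dist_mix _ _ _ _ _) _; first by rewrite l0 l1.
by have := wz i; have := ws i; have := normr_ge0 (tnth w i - tnth s i); nra.
Qed.

Lemma tclosure_slice_between S (a b x : R) (u v w : n.-tuple R) :
  Defs.convex_set S -> a < x < b -> S (cons_tuple a u) -> S (cons_tuple b v) ->
  tclosure S (cons_tuple x w) -> tclosure (slice S x) w.
Proof.
move=> cS /andP[ax xb] Sa Sb cw e e0.
pose M := \sum_(i < n) (`|tnth w i - tnth u i| + `|tnth w i - tnth v i|).
have Muv i : `|tnth w i - tnth u i| <= M /\ `|tnth w i - tnth v i| <= M.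
  have : `|tnth w i - tnth u i| + `|tnth w i - tnth v i| <= M.
    by rewrite /M (bigD1 i) //= lerDl; apply: sumr_ge0.
  have := normr_ge0 (tnth w i - tnth u i).
  by have := normr_ge0 (tnth w i - tnth v i); lra.
have M0 : 0 <= M by apply: sumr_ge0 => i _; apply: addr_ge0.
pose D := Num.min (x - a) (b - x).
have D0 : 0 < D by rewrite lt_min !subr_gt0 ax xb.
pose d := e / (1 + M / D).
have MD0 : 0 <= M / D by exact: divr_ge0 M0 (ltW D0).
have d0 : 0 < d by apply: divr_gt0 => //; lra.
have <- : d + d * (M / D) = e by rewrite /d; field; lra.
have [ys Sys near] := cw d d0; move: Sys near; case/tupleP: ys => y s Sy near.
have yx : `|y - x| < d by have := near ord0; rewrite !tnth0 distrC.
have ws i : `|tnth w i - tnth s i| < d.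
  by have := near (lift ord0 i); rewrite !tnthS.
have [xy|yx'] := lerP x y.
- apply: (@slice_point_near S x y a _ _ _ s u) => // [||i].
  + by left; rewrite ax xy.
  + by rewrite gtr0_norm ?subr_gt0 // ge_min lexx.
  + by case: (Muv i).
- apply: (@slice_point_near S x y b _ _ _ s v) => // [||i].
  + by right; rewrite xb ltW.
  + by rewrite ltr0_norm ?subr_lt0 // opprB ge_min lexx orbT.
  + by case: (Muv i).
Qed.

Lemma head_range_adherent {S x w} :
  tclosure S (cons_tuple x w) -> adherent_to (head_range S) x.
Proof.
move=> cw e /cw [s]; case/tupleP: s => a s Sa /(_ ord0).
by rewrite !tnth0 distrC => ax; exists a => //; exists s.
Qed.

(* Off the two extreme values of the head coordinate of S there are points
   of S with head on either side of x, and tclosure_slice_between applies. *)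
Lemma slice_tclosure_sub S x : Defs.convex_set S ->
  x != inf (head_range S) -> x != sup (head_range S) ->
  slice (tclosure S) x `<=` tclosure (slice S x).
Proof.
move=> cS xinf xsup w cw; have adx := head_range_adherent cw.
have [a [[u Sa] ax]] : exists a, head_range S a /\ a < x.
  apply: contrapT => nlb; apply: (negP xinf).
  apply/eqP/esym/(adherent_lbound_inf adx) => a Pa.
  by rewrite leNgt; apply/negP => ax; apply: nlb; exists a.
have [b [[v Sb] xb]] : exists b, head_range S b /\ x < b.
  apply: contrapT => nub; apply: (negP xsup).
  apply/eqP/esym/(adherent_ubound_sup adx) => b Pb.
  by rewrite leNgt; apply/negP => xb; apply: nub; exists b.
have axb : a < x < b by rewrite ax xb.
exact: tclosure_slice_between cS axb Sa Sb cw.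
Qed.

End ConvexSlices.

Section Indicators.
Context {T : Type} {R : realType}.
Implicit Types A B : set T.

Lemma indic_ge0 A x : 0 <= \1_A x :> R.
Proof. by rewrite indicE ler0n. Qed.

Lemma le_indic A B x : (A x -> B x) -> \1_A x <= \1_B x :> R.
Proof.
move=> AB; rewrite !indicE.
have [Ax|nAx] := pselect (A x); last by rewrite (memNset nAx) ler0n.
by rewrite (mem_set Ax) (mem_set (AB Ax)).
Qed.

End Indicators.

Section ClosureVolume.
Context {R : realType}.
Local Notation leb := (@lebesgue_measure R).
Local Open Scope ereal_scope.

Lemma Vn_ge0 n (A : set (n.-tuple R)) : 0 <= Vn A.
Proof. by apply: intn_ge0 => t; rewrite lee_fin indic_ge0. Qed.

Lemma le_Vn n (A B : set (n.-tuple R)) : A `<=` B -> Vn A <= Vn B.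
Proof.
move=> AB; apply: le_intn => t; rewrite lee_fin ?indic_ge0 //.
by apply: le_indic; exact: AB.
Qed.

Lemma VnS n (A : set (n.+1.-tuple R)) : Vn A = \int[leb]_x Vn (slice A x).
Proof. by []. Qed.

Lemma measurable_fun_Vn_slice n (A : set (n.+1.-tuple R)) : measurable A ->
  measurable_fun setT (fun x => Vn (slice A x)).
Proof.
move=> mA; apply: (@measurable_fun_intn_cons _ n (fun t => (\1_A t)%:E)).
  by apply/measurable_EFinP; exact: measurable_indic.
by move=> t; rewrite lee_fin indic_ge0.
Qed.

Lemma ge0_le_integral_except2 (f g : R -> \bar R) (c1 c2 : R) :
  measurable_fun setT f -> (forall x, 0 <= f x) -> (forall x, 0 <= g x) ->
  (forall x, x != c1 -> x != c2 -> f x <= g x) ->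
  \int[leb]_x f x <= \int[leb]_x g x.
Proof.
move=> mf f0 g0 fg.
have m1 : measurable (setT `\ c1 : set R) by apply: measurableD.
rewrite -(integral_setD1 (r := c1)) //; last exact: measurable_funS mf.
rewrite -(integral_setD1 (r := c2)) //; first last.
- exact: measurable_funS mf.
- exact: measurableD.
rewrite integral_mkcond; apply: ge0_le_integralT => x; rewrite patchE.
  by case: ifP.
by case: ifP => [/set_mem [[_ /eqP xc1] /eqP xc2]|_]; [exact: fg|].
Qed.

Lemma Vn_tclosure n (S : set (n.-tuple R)) :
  Defs.convex_set S -> Vn (tclosure S) <= Vn S.
Proof.
elim: n S => [|n IH] S cS.
  apply: le_Vn => w /(_ 1%R ltr01) [s Ss _].
  by rewrite (tuple0 w) -(tuple0 s).
rewrite !VnS; set lo := inf (head_range S); set hi := sup (head_range S).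
apply: (@ge0_le_integral_except2 _ _ lo hi).
- apply: measurable_fun_Vn_slice; exact: measurable_tclosure.
- by move=> x; apply: Vn_ge0.
- by move=> x; apply: Vn_ge0.
move=> x xinf xsup; apply: le_trans (IH _ (convex_slice S x cS)).
exact/le_Vn/slice_tclosure_sub.
Qed.

End ClosureVolume.

Section BoundedDensity.
Context {R : realType} {n : nat} {f : n.-tuple R -> R} {K : R}.
Hypotheses (mf : measurable_fun setT f) (f_ge0 : forall z, (0 <= f z)%R)
  (f_leK : forall z, (f z <= K)%R) (intn_f : intn (fun z => (f z)%:E) = 1%E).
Local Open Scope ereal_scope.

Let mass (A : set (n.-tuple R)) := intn (fun z => (\1_A z * f z)%:E).

Let mass_ge0 A : 0 <= mass A.
Proof. by apply: intn_ge0 => z; rewrite lee_fin mulr_ge0 ?indic_ge0. Qed.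

Lemma density_bound_gt0 : (0 < K)%R.
Proof.
rewrite ltNge; apply/negP => K_le0.
suff : intn (fun z => (f z)%:E) <= 0 by rewrite intn_f lee_fin ler10.
rewrite -(intn0 n); apply: le_intn => z; rewrite lee_fin //.
exact: le_trans (f_leK z) K_le0.
Qed.

Lemma mass_le_Vn W : measurable W -> mass W <= K%:E * Vn W.
Proof.
move=> mW; have K0 := ltW density_bound_gt0.
apply: le_trans (_ : intn (fun z => K%:E * (\1_W z)%:E) <= _).
  apply: le_intn => z; first by rewrite lee_fin mulr_ge0 ?indic_ge0.
  by rewrite -EFinM lee_fin mulrC ler_wpM2r ?indic_ge0.
rewrite intnZ //.
by apply/measurable_EFinP; exact: measurable_indic.
Qed.

Lemma mass_setC_add W : measurable W -> mass (~` W) + mass W = 1.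
Proof.
move=> mW; rewrite /mass -intnD; last 4 first.
- apply/measurable_EFinP/measurable_funM => //.
  exact/measurable_indic/measurableC.
- by apply/measurable_EFinP/measurable_funM => //; exact: measurable_indic.
- by move=> z; rewrite lee_fin mulr_ge0 ?indic_ge0.
- by move=> z; rewrite lee_fin mulr_ge0 ?indic_ge0.
rewrite -intn_f; congr intn; apply: funext => z; rewrite -EFinD -mulrDl !indicE.
have [Wz|nWz] := pselect (W z).
  by rewrite (mem_set Wz) (memNset (_ : ~ (~` W) z)) ?add0r ?mul1r.
by rewrite (memNset nWz) (mem_set (nWz : (~` W) z)) addr0 mul1r.
Qed.

(* S need not be measurable; its closure is, has no larger volume, and its
   complement is contained in the complement of S. *)
Lemma mass_setD_convex (U S : set (n.-tuple R)) (v : R) :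
  (forall z, ~ U z -> f z = 0%R) -> Defs.convex_set S -> Vn S <= v%:E ->
  (1 - K * v)%:E <= mass (U `\` S).
Proof.
move=> fU cS VSv; set W := tclosure S.
have mW : measurable W := measurable_tclosure S.
have lower : mass (~` W) <= mass (U `\` S).
  apply: le_intn => z; first by rewrite lee_fin mulr_ge0 ?indic_ge0.
  have [Uz|nUz] := pselect (U z); last by rewrite fU ?mulr0.
  rewrite lee_fin ler_wpM2r ?le_indic // => nWz.
  by split=> // Sz; apply: nWz; exact: subset_tclosure.
have upper : mass W <= (K * v)%:E.
  apply: le_trans (mass_le_Vn W mW) _; rewrite EFinM lee_wpmul2l //.
    by rewrite lee_fin ltW // density_bound_gt0.
  exact: le_trans (Vn_tclosure n S cS) VSv.
have := mass_setC_add W mW; move: lower upper (mass_ge0 (~` W)) (mass_ge0 W).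
case: (mass (~` W)) => [x| |] //; case: (mass W) => [y| |] //=.
move=> lx; rewrite lee_fin => yv _ _ [xy].
by apply: le_trans lx; rewrite lee_fin; lra.
Qed.

End BoundedDensity.

Theorem proposition1 (R : realType) (C r : R) (hC : 0 < C) (hr : 0 < r)
  (fam : forall M n : nat, @joint_model R M n)
  (hfam : forall M n : nat, (0 < M)%N -> (0 < n)%N -> is_joint_model (fam M n))
  (hbound : forall M n : nat, (0 < M)%N -> (0 < n)%N ->
     forall (i : 'I_M) (y : M.-tuple (n.-tuple R)) (z : n.-tuple R),
       cdens (fam M n) i y z <= C / (r ^+ n * fine (Vn (unit_ball n)))) :
  forall B : R, 0 < B < 1 -> SmAC_with (B * r) B C fam.
Proof.
move=> B /andP[B0 B1]; split; rewrite ?mulr_gt0 ?B0 ?B1 //.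
move=> M n M0 n0 S cS VS i y.
have [_ _ _ _ /(_ i y) [[mf f0] fball intf _ _]] := hfam M n M0 n0.
have fK := hbound M n M0 n0 i y.
set V := Vn (unit_ball n) in VS fK.
have K0 := density_bound_gt0 f0 fK intf.
(* Otherwise the bound would be C / 0 = 0. *)
have V_neq0 : fine V != 0.
  by apply: contraTneq K0 => ->; rewrite mulr0 invr0 mulr0 ltxx.
have VE : V = (fine V)%:E.
  by move: V_neq0; rewrite /V; case: (Vn _) => //=; rewrite eqxx.
have := mass_setD_convex mf f0 fK intf _ S ((B * r) ^+ n * fine V) fball cS.
rewrite (_ : _ * (_ * fine V) = C * B ^+ n); first apply.
  by rewrite EFinM -VE.
by rewrite exprMn; field; rewrite V_neq0 expf_neq0 ?gt_eqF.
Qed.
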